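(* Let $p\ge1$ be an integer, $x_1,\dots,x_p\in\mathbb{R}_{\ge0}$, $\epsilon\in(0,1]$, and $\delta>0$ with $\delta\le\frac{\min_{i\in[p]}x_i}{4\epsilon^{-1}\log(2p\epsilon^{-1})}$. Let $x'_1,\dots,x'_p\in\mathbb{R}_{\ge0}$ satisfy $x_i\le x'_i\le x_i+\delta$ for all $i\in[p]$. Then $\mathrm{TV}\big(\mathrm{softargmin}^\epsilon_{i\in[p]}x_i,\ \mathrm{softargmin}^\epsilon_{i\in[p]}x'_i\big)\le\frac{10\epsilon^{-1}\log(2p\epsilon^{-1})\delta}{\min_{i\in[p]}x_i}$.
   Context: Softmin: if $\min_i x_i=0$, $\mathrm{softargmin}^\epsilon_{i\in[p]}x_i$ is an arbitrary index $i$ with $x_i=0$. Otherwise, sample $\bm c$ uniformly from $\big[\frac{2\epsilon^{-1}\log(2p\epsilon^{-1})}{\min_i x_i},\frac{4\epsilon^{-1}\log(2p\epsilon^{-1})}{\min_i x_i}\big]$, then sample $\bm i^*\in[p]$ with $\Pr[\bm i^*=i\mid\bm c]=\exp(-\bm c x_i)/\sum_{i'\in[p]}\exp(-\bm c x_{i'})$, and set $\mathrm{softargmin}^\epsilon_{i\in[p]}x_i=\bm i^*$ (the same procedure on $x'_1,\dots,x'_p$ defines $\mathrm{softargmin}^\epsilon_{i\in[p]}x'_i$). $\log$ is natural. $\mathrm{TV}(\bm X,\bm X')=\inf_{\mathcal D}\Pr_{(X,X')\sim\mathcal D}[X\neq X']$ over couplings $\mathcal D$. *)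

From HB Require Import structures.
From mathcomp Require Import all_boot all_order all_algebra.
From mathcomp Require Import all_classical all_reals all_analysis.
Set Implicit Arguments. Unset Strict Implicit. Unset Printing Implicit Defensive.
Import Order.TTheory GRing.Theory Num.Theory.
Local Open Scope classical_set_scope.
Local Open Scope ring_scope.

Section SoftMin.
Variable R : realType.

(* min_{i in [p]} x_i  (meaningful for p >= 1) *)
Definition minx (p : nat) (x : 'I_p -> R) : R := inf [set x i | i in [set: 'I_p]].

Definition Lconst (p : nat) (eps : R) : R := eps^-1 * ln (2 * p%:R * eps^-1).

(* The law (probability mass function on [p]) of softargmin^eps_{i in [p]} x_i:
   if min x = 0, a (fixed) index i with x_i = 0;
   otherwise c ~ Unif[2L/min x, 4L/min x] and Pr[i* = i | c] = exp(-c x_i)/sum exp(-c x_j),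
   so Pr[i* = i] = (1/(b-a)) * int_a^b exp(-c x_i)/sum_j exp(-c x_j) dc. *)
Definition softargmin_law (p : nat) (eps : R) (x : 'I_p -> R) (i : 'I_p) : R :=
  let m := minx x in
  if m == 0 then
    (if [pick j | x j == 0] is Some j then (i == j)%:R else 0)
  else
    let a := 2 * Lconst p eps / m in
    let b := 4 * Lconst p eps / m in
    (b - a)^-1 *
      Rintegral lebesgue_measure `[a, b]
        (fun c => expR (- (c * x i)) / \sum_(j < p) expR (- (c * x j))).

Definition is_coupling (p : nat) (P Q : 'I_p -> R) (D : 'I_p -> 'I_p -> R) : Prop :=
  (forall i j, 0 <= D i j) /\
  (forall i, \sum_(j < p) D i j = P i) /\
  (forall j, \sum_(i < p) D i j = Q j).

(* TV(X, X') = inf over couplings of Pr[X <> X'] *)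
Definition TV (p : nat) (P Q : 'I_p -> R) : R :=
  inf [set \sum_(i < p) \sum_(j < p | j != i) D i j | D in is_coupling P Q].

End SoftMin.

From HB Require Import structures.
From mathcomp Require Import all_boot all_order all_algebra.
From mathcomp Require Import all_classical all_reals all_analysis.
From mathcomp Require Import ring lra.
Import Order.TTheory GRing.Theory Num.Theory.
Import numFieldNormedType.Exports.
Local Open Scope ring_scope.
Local Open Scope classical_set_scope.

(* Write L for [Lconst p eps] and a = 2L / min x.  The softmin law with inverse temperature
   uniform on [a, 2a] is the average over that window of the Gibbs weights
   w_x(c)_i = exp(-c x_i) / sum_j exp(-c x_j).  Raising x by at most delta multiplies each
   numerator by at least exp(-c delta) >= 1 - 2 a delta and only lowers the partition function,
   so on the window [a, 2a'] shared with x' (a' = 2L / min x') the damped x-weights lie below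
   both laws.  A common sub-measure of mass 1 - s bounds the total variation by s, and the
   windows are shifted by only a - a' <= a^2 delta, whence TV <= 4 a delta = 8 L delta / min x. *)

Lemma div_sub_div_le_sqr (R : realFieldType) (k m m' delta : R) :
  1 <= k -> 0 < m -> m <= m' <= m + delta -> k / m - k / m' <= (k / m) ^+ 2 * delta.
Proof.
move=> k1 m0 /andP[mm' m'd]; have m'0 : 0 < m' by lra.
have -> : k / m - k / m' = k / m * ((m' - m) / m') by field; rewrite !gt_eqF.
have t0 : 0 <= k / m by rewrite divr_ge0 //; lra.
rewrite expr2 -[leRHS]mulrA ler_wpM2l // ler_pdivrMr //.
have -> : k / m * delta * m' = delta * k + k / m * delta * (m' - m).
  by rewrite -{2}(mulfVK (negbT (gt_eqF m0)) k); ring.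
have : 0 <= k / m * delta * (m' - m) by rewrite mulr_ge0 ?(mulr_ge0 t0) //; lra.
have : delta <= delta * k by rewrite ler_peMr //; lra.
lra.
Qed.

Section Rintegral_lemmas.
Context d (T : measurableType d) (R : realType) (mu : measure T R).

Lemma Rintegral_le_subset (A B : set T) (f : T -> R) :
  measurable A -> measurable B -> A `<=` B ->
  mu.-integrable B (EFin \o f) -> (forall t, B t -> 0 <= f t) ->
  Rintegral mu A f <= Rintegral mu B f.
Proof.
move=> mA mB AB fB f0; apply: fine_le.
- exact: (integrable_fin_num mA (integrableS mB mA AB fB)).
- exact: (integrable_fin_num mB fB).
by apply: ge0_subset_integral => //; exact: measurable_int fB.
Qed.

Lemma Rintegral_sum (D : set T) (I : Type) (s : seq I) (F : I -> T -> R) :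
  measurable D -> (forall i, mu.-integrable D (EFin \o F i)) ->
  Rintegral mu D (fun t => \sum_(i <- s) F i t) =
  \sum_(i <- s) Rintegral mu D (F i).
Proof.
move=> mD FD; elim: s => [|i s IH].
  by rewrite big_nil; under eq_Rintegral do rewrite big_nil; rewrite Rintegral_cst // mul0r.
rewrite big_cons -IH; under eq_Rintegral do rewrite big_cons.
apply: RintegralD => //.
have := integrable_sum mD s (P := xpredT) (fun i _ => FD i).
by apply: eq_integrable => // t _; rewrite /= sumEFin.
Qed.

End Rintegral_lemmas.

Section Rintegral_itv.
Context {R : realType}.

Lemma continuous_integrable_itv (u v : R) (f : R -> R) : continuous f ->
  lebesgue_measure.-integrable `[u, v] (EFin \o f).
Proof.
move=> cf; apply: continuous_compact_integrable; first exact: segment_compact.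
exact: continuous_subspaceT.
Qed.

Lemma Rintegral1_itv (u v : R) : u <= v ->
  Rintegral lebesgue_measure `[u, v] (fun=> 1) = v - u.
Proof.
move=> uv; rewrite Rintegral_cst // mul1r.
change (fine (@lebesgue_measure R `[u, v]) = v - u).
rewrite lebesgue_measure_itv /= lte_fin.
case: ltP => // vu.
by rewrite (@le_anti _ _ v u) ?uv ?vu // subrr.
Qed.

Lemma Rintegral_itv_le_subset (f : R -> R) (u v u' v' : R) :
  u' <= u -> v <= v' -> continuous f -> (forall c, 0 <= f c) ->
  Rintegral lebesgue_measure `[u, v] f <= Rintegral lebesgue_measure `[u', v'] f.
Proof.
move=> u'u vv' cf f0; apply: Rintegral_le_subset => //.
- by apply: subset_itv; rewrite bnd_simp.
- exact: continuous_integrable_itv.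
Qed.

End Rintegral_itv.

Section TotalVariation.
Context {R : realType} {p : nat}.
Variables P Q : 'I_p -> R.

Lemma TV_le_coupling (D : 'I_p -> 'I_p -> R) :
  is_coupling P Q D -> TV P Q <= \sum_(i < p) \sum_(j < p | j != i) D i j.
Proof.
move=> DC; apply: ge_inf; last by exists D.
exists 0 => _ [D' [D'0 _] <-].
by apply: sumr_ge0 => i _; apply: sumr_ge0 => j _; exact: D'0.
Qed.

Lemma TV_le_overlap (mu : 'I_p -> R) :
  \sum_(i < p) P i = 1 -> \sum_(i < p) Q i = 1 ->
  (forall i, 0 <= mu i <= P i) -> (forall i, mu i <= Q i) ->
  TV P Q <= 1 - \sum_(i < p) mu i.
Proof.
move=> sP sQ hP hQ; set r := 1 - \sum_(i < p) mu i.
have muP i : mu i <= P i by case/andP: (hP i).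
have residual_eq0 (F : 'I_p -> R) : (forall i, mu i <= F i) ->
    \sum_(i < p) F i = 1 -> r = 0 -> forall i, F i - mu i = 0.
  move=> muF sF r0 i.
  have Fmu0 k : xpredT k -> 0 <= F k - mu k by rewrite subr_ge0.
  by apply: (psumr_eq0P Fmu0) => //; rewrite sumrB sF.
(* Couple the residual masses independently; if [r = 0] they vanish, matching [/ 0 = 0]. *)
pose E i j := (P i - mu i) * (Q j - mu j) / r.
have rowE i : \sum_(j < p) E i j = P i - mu i.
  rewrite /E -big_distrl -big_distrr /= sumrB sQ -/r.
  have [r0|r0] := eqVneq r 0; last by rewrite mulfK.
  by rewrite (residual_eq0 P muP sP r0) !mul0r.
have colE j : \sum_(i < p) E i j = Q j - mu j.
  rewrite /E -!big_distrl /= sumrB sP -/r [r * _]mulrC.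
  have [r0|r0] := eqVneq r 0; last by rewrite mulfK.
  by rewrite (residual_eq0 Q hQ sQ r0) !mul0r.
have r_ge0 : 0 <= r by rewrite /r -sP -sumrB sumr_ge0 // => i _; rewrite subr_ge0.
pose D i j := (i == j)%:R * mu i + E i j.
have D_coupling : is_coupling P Q D.
  split; [|split].
  - move=> i j; apply: addr_ge0; first by rewrite mulr_ge0 ?ler0n //; case/andP: (hP i).
    by rewrite /E !mulr_ge0 ?invr_ge0 // subr_ge0.
  - move=> i; rewrite big_split /= rowE (bigD1 i) //= eqxx mul1r big1 ?addr0 ?subrKC //.
    by move=> j; rewrite eq_sym => /negbTE ->; rewrite mul0r.
  - move=> j; rewrite big_split /= colE (bigD1 j) //= eqxx mul1r big1 ?addr0 ?subrKC //.
    by move=> i /negbTE ->; rewrite mul0r.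
have off_diag i : \sum_(j < p | j != i) D i j <= P i - mu i.
  rewrite -rowE [leRHS](bigD1 i) //= (eq_bigr (E i)) ?lerDr.
    by rewrite /E !mulr_ge0 ?invr_ge0 // subr_ge0.
  by move=> j; rewrite /D eq_sym => /negbTE ->; rewrite mul0r add0r.
apply: le_trans (TV_le_coupling _ D_coupling) _.
by rewrite /r -sP -sumrB; apply: ler_sum => i _; exact: off_diag.
Qed.

End TotalVariation.

Lemma continuous_sum (R : realType) (I : Type) (s : seq I) (F : I -> R -> R) :
  (forall i, continuous (F i)) -> continuous (fun c => \sum_(i <- s) F i c).
Proof.
move=> cF c; suff : {for c, continuous (fun c => \sum_(i <- s) F i c)} by [].
elim: s => [|i s IH].
  by under [X in {for c, continuous X}]funext do rewrite big_nil; exact: cvg_cst.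
under [X in {for c, continuous X}]funext do rewrite big_cons.
exact: continuousD (cF i c) IH.
Qed.

Section Softmin.
Context {R : realType} {p : nat}.
Implicit Types (x y : 'I_p -> R) (a c : R).

Definition softmin_partition y c := \sum_(j < p) expR (- (c * y j)).

Definition softmin_weight y i c := expR (- (c * y i)) / softmin_partition y c.

Definition softmin_mixture y a i :=
  a^-1 * Rintegral lebesgue_measure `[a, 2 * a] (softmin_weight y i).

Lemma softmin_partition_gt0 (i : 'I_p) y c : 0 < softmin_partition y c.
Proof.
rewrite /softmin_partition (bigD1 i) //= ltr_pwDl ?expR_gt0 //.
by rewrite sumr_ge0 // => j _; rewrite expR_ge0.
Qed.

Lemma softmin_weight_ge0 y i c : 0 <= softmin_weight y i c.
Proof. by rewrite divr_ge0 ?expR_ge0 // ltW // (softmin_partition_gt0 i). Qed.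

Lemma sum_softmin_weight (i0 : 'I_p) y c : \sum_(i < p) softmin_weight y i c = 1.
Proof.
by rewrite -big_distrl /= divff // gt_eqF // (softmin_partition_gt0 i0).
Qed.

Lemma continuous_softmin_weight y i : continuous (softmin_weight y i).
Proof.
have cexp (t : R) : continuous (fun c : R => expR (- (c * t))).
  move=> c; apply: continuous_comp; last exact: continuous_expR.
  by apply: continuousN; apply: continuousM; [exact: cvg_id|exact: cvg_cst].
have cZ : continuous (softmin_partition y) by apply: continuous_sum => j; exact: cexp.
move=> c; have Z0 : softmin_partition y c != 0 by rewrite gt_eqF // (softmin_partition_gt0 i).
exact: continuousM (cexp _ c) (continuousV Z0 (cZ c)).
Qed.

Lemma sum_Rintegral_softmin_weight (i0 : 'I_p) y (u v : R) : u <= v ->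
  \sum_(i < p) Rintegral lebesgue_measure `[u, v] (softmin_weight y i) = v - u.
Proof.
move=> uv; rewrite -Rintegral_sum //; last first.
  by move=> i; apply: continuous_integrable_itv; exact: continuous_softmin_weight.
by under eq_Rintegral do rewrite (sum_softmin_weight i0); exact: Rintegral1_itv.
Qed.

Lemma sum_softmin_mixture (i0 : 'I_p) y a : 0 < a ->
  \sum_(i < p) softmin_mixture y a i = 1.
Proof.
move=> a0; rewrite -big_distrr /= (sum_Rintegral_softmin_weight i0); last lra.
by rewrite (_ : 2 * a - a = a) ?mulVf ?gt_eqF //; ring.
Qed.

Lemma softmin_weight_shift x x' (delta : R) i c :
  (forall j, x j <= x' j <= x j + delta) -> 0 <= c ->
  expR (- (c * delta)) * softmin_weight x i c <= softmin_weight x' i c.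
Proof.
move=> hx c0; have Z0 := softmin_partition_gt0 i x c.
rewrite /softmin_weight mulrA.
apply: ler_pM; rewrite ?mulr_ge0 ?expR_ge0 ?invr_ge0 ?(ltW Z0) //.
  rewrite -expRD ler_expR -opprD -mulrDr lerN2 ler_wpM2l // addrC.
  by case/andP: (hx i).
rewrite lef_pV2 ?posrE ?(softmin_partition_gt0 i) //.
apply: ler_sum => j _; rewrite ler_expR lerN2 ler_wpM2l //.
by case/andP: (hx j).
Qed.

Lemma TV_softmin_mixture_le (i0 : 'I_p) x x' (delta : R) a a' :
  (forall j, x j <= x' j <= x j + delta) -> 0 <= delta ->
  0 < a' -> a' <= a -> a - a' <= a ^+ 2 * delta -> 2 * a * delta <= 1 ->
  TV (softmin_mixture x a) (softmin_mixture x' a') <= 4 * a * delta.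
Proof.
move=> hx d0 a'0 a'a gap ad.
have a0 : 0 < a by exact: lt_le_trans a'a.
have a2a' : a <= 2 * a' by nra.
have Winteg y i u v : lebesgue_measure.-integrable `[u, v] (EFin \o softmin_weight y i).
  by apply: continuous_integrable_itv; exact: continuous_softmin_weight.
have Wsub y i u v u' v' : u' <= u -> v <= v' ->
    Rintegral lebesgue_measure `[u, v] (softmin_weight y i) <=
    Rintegral lebesgue_measure `[u', v'] (softmin_weight y i).
  move=> u'u vv'; apply: Rintegral_itv_le_subset => //.
  - exact: continuous_softmin_weight.
  - exact: softmin_weight_ge0.
(* The common part: the [x]-weights on the window [a, 2a'] shared by both laws, damped by
   [1 - 2 a delta]. *)
pose I i := Rintegral lebesgue_measure `[a, 2 * a'] (softmin_weight x i).
pose mu i := a^-1 * ((1 - 2 * a * delta) * I i).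
have inv_a0 : 0 <= a^-1 by rewrite invr_ge0 ltW.
have damp0 : 0 <= 1 - 2 * a * delta by lra.
have I0 i : 0 <= I i by apply: Rintegral_ge0 => c _; exact: softmin_weight_ge0.
have damp i : (1 - 2 * a * delta) * I i <=
    Rintegral lebesgue_measure `[a, 2 * a'] (softmin_weight x' i).
  rewrite -RintegralZl //; last exact: Winteg.
  apply: le_Rintegral => //.
  - have cW : continuous (fun c => (1 - 2 * a * delta) * softmin_weight x i c).
      move=> c; exact: (continuousM (@cst_continuous _ _ (1 - 2 * a * delta) c)
                                    (continuous_softmin_weight x i c)).
    exact: continuous_integrable_itv cW.
  - exact: Winteg.
  move=> c; rewrite /= in_itv /= => /andP[ac ca'].
  rewrite -/(softmin_weight x i c) -/(softmin_weight x' i c).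
  apply: le_trans (softmin_weight_shift _ _ _ i c hx (ltW (lt_le_trans a0 ac))).
  apply: ler_wpM2r; first exact: softmin_weight_ge0.
  apply: le_trans (expR_ge1Dx _); nra.
apply: le_trans (TV_le_overlap _ _ mu _ _ _ _) _.
- exact: sum_softmin_mixture.
- exact: sum_softmin_mixture.
- move=> i; apply/andP; split; first by rewrite /mu !mulr_ge0.
  rewrite /mu /softmin_mixture ler_wpM2l //.
  apply: le_trans (Wsub x i a (2 * a') a (2 * a) (lexx a) _); last lra.
  by rewrite ler_piMl //; nra.
- move=> i; rewrite /mu /softmin_mixture; apply: ler_pM; rewrite ?mulr_ge0 //.
    by rewrite lef_pV2 ?posrE.
  exact: le_trans (damp i) (Wsub x' i a (2 * a') a' (2 * a') a'a (lexx _)).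
rewrite -!big_distrr /= (sum_Rintegral_softmin_weight i0) //.
have overlap : a * (1 - 4 * a * delta) <= (1 - 2 * a * delta) * (2 * a' - a).
  have : 0 <= (1 - 2 * a * delta) * (2 * a' - a - a * (1 - 2 * a * delta)) by nra.
  nra.
rewrite lerBlDr -lerBlDl ler_pdivlMl //; nra.
Qed.

Lemma softargmin_lawE (eps : R) y : minx y != 0 ->
  softargmin_law eps y = softmin_mixture y (2 * Lconst p eps / minx y).
Proof.
move=> my0; apply/funext => i; rewrite /softargmin_law /= (negbTE my0).
set a := 2 * Lconst p eps / minx y.
have -> : 4 * Lconst p eps / minx y = 2 * a by rewrite /a; ring.
by rewrite (_ : 2 * a - a = a) //; ring.
Qed.

Lemma minx_le y i : (forall j, 0 <= y j) -> minx y <= y i.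
Proof.
move=> y0; apply: ge_inf; last by exists i.
by exists 0 => _ [j _ <-].
Qed.

Lemma le_minx (i0 : 'I_p) y (c : R) : (forall i, c <= y i) -> c <= minx y.
Proof.
move=> cy; apply: lb_le_inf; first by exists (y i0), i0.
by move=> _ [j _ <-].
Qed.

Lemma minx_shift (i0 : 'I_p) (x x' : 'I_p -> R) (delta : R) : (forall i, 0 <= x i) ->
  (forall i, x i <= x' i <= x i + delta) -> minx x <= minx x' <= minx x + delta.
Proof.
move=> x0 hx; apply/andP; split.
  apply: (le_minx i0) => i; apply: le_trans (minx_le _ i x0) _.
  by case/andP: (hx i).
rewrite -lerBlDr; apply: (le_minx i0) => i; rewrite lerBlDr.
have x'0 j : 0 <= x' j by apply: le_trans (x0 j) _; case/andP: (hx j).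
by apply: le_trans (minx_le _ i x'0) _; case/andP: (hx i).
Qed.

Lemma Lconst_ge_half (eps : R) :
  (1 <= p)%N -> 0 < eps -> eps <= 1 -> 1 / 2 <= Lconst p eps.
Proof.
move=> p1 e0 e1; rewrite /Lconst.
have ln2 : 1 / 2 <= ln (2 : R).
  by have := expR_ge1Dx (- ln (2 : R)); rewrite expRN lnK ?posrE //; lra.
have einv1 : 1 <= eps^-1 by rewrite invf_ge1.
have p1R : 1 <= p%:R :> R by rewrite ler1n.
have ln_ge : ln (2 : R) <= ln (2 * p%:R * eps^-1) by rewrite ler_ln ?posrE; nra.
nra.
Qed.

End Softmin.

Theorem mainTheorem11 (R : realType) (p : nat) (x x' : 'I_p -> R) (eps delta : R) :
  (1 <= p)%N ->
  (forall i, 0 <= x i) -> (forall i, 0 <= x' i) ->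
  0 < eps -> eps <= 1 ->
  0 < delta -> delta <= minx x / (4 * Lconst p eps) ->
  (forall i, x i <= x' i <= x i + delta) ->
  TV (softargmin_law eps x) (softargmin_law eps x')
    <= 10 * Lconst p eps * delta / minx x.
Proof.
move=> hp x0 _ e0 e1 d0 dle hx.
pose i0 := Ordinal hp.
have L_half := Lconst_ge_half eps hp e0 e1.
set L := Lconst p eps in dle L_half *; set m := minx x in dle *; set m' := minx x'.
have dm : delta * (4 * L) <= m by rewrite -ler_pdivlMr //; lra.
have m0 : 0 < m by nra.
have /andP[mm' m'd] : m <= m' <= m + delta := minx_shift i0 _ _ _ x0 hx.
have m'0 : 0 < m' by lra.
rewrite !softargmin_lawE -/L -/m -/m' ?gt_eqF //.
set a := 2 * L / m; set a' := 2 * L / m'.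
have am : a * m = 2 * L by rewrite /a mulfVK ?gt_eqF.
have a'0 : 0 < a' by rewrite divr_gt0 //; lra.
have a'a : a' <= a by rewrite ler_wpM2l ?lef_pV2 ?posrE //; lra.
have gap : a - a' <= a ^+ 2 * delta by apply: div_sub_div_le_sqr; rewrite ?mm' //; lra.
have ad : 2 * a * delta <= 1 by nra.
apply: le_trans (TV_softmin_mixture_le i0 _ _ _ _ _ hx (ltW d0) a'0 a'a gap ad) _.
by rewrite ler_pdivlMr //; nra.
Qed.
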